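(* Let $\delta>0$ and let $A,B,C,D$ be nonnegative constants with $A\in(0,1)$ and $C>0$. Then there exists a function $\varphi\in C^2((0,\delta])\cap C([0,\delta])$, depending on $A,B,C,D,\delta$, which is positive on $(0,\delta]$, solves $$\varphi''(r)+\Big(\frac{A}{r}+B\Big)\varphi'(r)=-C\qquad\text{for } r\in(0,\delta],$$ and satisfies: (i) $\varphi'(r)>0$ and $\varphi''(r)<0$ for all $r\in(0,\delta]$; (ii) $\varphi''(r)-\dfrac{\varphi'(r)}{r}\le -C$ for all $r\in(0,\delta]$; (iii) $\varphi(\delta)\ge D$; (iv) $\displaystyle\sup_{0<r\le\delta}\frac{\varphi(r)}{r^{1-A}}<+\infty$. *)

From Stdlib Require Export Reals.
Open Scope R_scope.

Definition Ioc0 (d : R) : R -> Prop := fun r => 0 < r /\ r <= d.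
Definition Icc0 (d : R) : R -> Prop := fun r => 0 <= r /\ r <= d.

Definition deriv_within (D : R -> Prop) (f : R -> R) (x l : R) : Prop :=
  limit1_in (fun y => (f y - f x) / (y - x)) (fun y => D y /\ y <> x) l x.

Definition cont_within (D : R -> Prop) (f : R -> R) (x : R) : Prop :=
  limit1_in f D (f x) x.

Definition C2_on (D : R -> Prop) (f f1 f2 : R -> R) : Prop :=
  forall x, D x ->
    deriv_within D f x (f1 x) /\ deriv_within D f1 x (f2 x) /\
    cont_within D f2 x.

From Coquelicot Require Import Coquelicot.
From Stdlib Require Import Reals Lra.
Open Scope R_scope.

(* Multiplied by the integrating factor r^A e^(Br), the equation reads
   (e^(Br) F)' = -C r^A e^(Br) for the rescaled slope F r := r^A phi' r, so
   F r = e^(-Br) (K - C int_0^r s^A e^(Bs) ds), and K is chosen so large that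
   F stays above (D + 1) / delta^(1-A) on [0, delta].  Then phi' > 0, and the
   equation itself gives phi'' < 0 and phi'' - phi'/r <= -C.  Taking
   phi r := int_0^r s^(-A) F s ds (phi' ~ r^(-A) is integrable since A < 1),
   Cauchy's mean value theorem for phi and r^(1-A) on [0, r] yields
   phi r = r^(1-A) F c / (1 - A) for some c in (0, r), which gives positivity,
   phi delta >= D and the bound on phi r / r^(1-A). *)

Lemma deriv_within_of_is_derive (Dom : R -> Prop) (f : R -> R) (x l : R) :
  is_derive f x l -> deriv_within Dom f x l.
Proof.
  intros Hf eps Heps.
  destruct (proj1 (is_derive_Reals f x l) Hf eps Heps) as [d Hd].
  exists d; split; [apply cond_pos |].
  intros y [[_ Hyx] Hy]; simpl in *; unfold R_dist in *.
  specialize (Hd (y - x)); replace (x + (y - x)) with y in Hd by ring.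
  apply Hd; [lra | exact Hy].
Qed.

Lemma cont_within_of_continuous (Dom : R -> Prop) (f : R -> R) (x : R) :
  continuous f x -> cont_within Dom f x.
Proof.
  intros Hf eps Heps.
  destruct (proj2 (continuity_pt_filterlim f x) Hf eps Heps) as [d [Hd Hfd]].
  exists d; split; [exact Hd |].
  intros y [Hy Hyx]; destruct (Req_dec x y) as [<- | Hne].
  - simpl; unfold R_dist; rewrite Rminus_diag, Rabs_R0; exact Heps.
  - apply Hfd; repeat split; auto.
Qed.

Lemma exp_le_mono (x y : R) : x <= y -> exp x <= exp y.
Proof. intros [Hxy | ->]; [left; apply exp_increasing, Hxy | right; reflexivity]. Qed.

Lemma le_of_is_derive_ge0 (f f' : R -> R) (a b : R) :
  (forall x, is_derive f x (f' x)) -> (forall x, 0 <= f' x) ->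
  a <= b -> f a <= f b.
Proof.
  intros Hf Hf' [Hab | <-]; [| lra].
  destruct (MVT_cor2 f f' a b Hab) as [c [Hfc _]].
  - intros c _; apply is_derive_Reals, Hf.
  - specialize (Hf' c); nra.
Qed.

Lemma cauchy_mvt (f g f' g' : R -> R) (a b : R) : a < b ->
  (forall c, a < c < b -> is_derive f c (f' c)) ->
  (forall c, a < c < b -> is_derive g c (g' c)) ->
  (forall c, continuous f c) -> (forall c, continuous g c) ->
  exists c, a < c < b /\ (g b - g a) * f' c = (f b - f a) * g' c.
Proof.
  intros Hab Hf Hg Cf Cg.
  pose (df := fun c (Hc : a < c < b) => exist (fun l => derivable_pt_abs f c l)
                (f' c) (proj1 (is_derive_Reals _ _ _) (Hf c Hc))).
  pose (dg := fun c (Hc : a < c < b) => exist (fun l => derivable_pt_abs g c l)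
                (g' c) (proj1 (is_derive_Reals _ _ _) (Hg c Hc))).
  destruct (MVT f g a b df dg Hab) as [c [Hc E]].
  - intros c _; apply continuity_pt_filterlim, Cf.
  - intros c _; apply continuity_pt_filterlim, Cg.
  - exists c; split; [exact Hc | exact E].
Qed.

Lemma is_derive_RInt_0 (f : R -> R) (x : R) : (forall t, continuous f t) ->
  is_derive (fun r => RInt f 0 r) x (f x).
Proof.
  intros Hf; apply (is_derive_RInt f _ 0 x); [| apply Hf].
  apply filter_forall; intros b.
  apply (@RInt_correct R_CompleteNormedModule).
  apply (@ex_RInt_continuous R_CompleteNormedModule); auto.
Qed.

(* Stdlib's [Rpower 0 p] is [exp (p * ln 0) = 1]; [rpow0] is the power
   function extended by 0 to the nonpositive reals. *)
Definition rpow0 (p x : R) : R := if Rlt_dec 0 x then Rpower x p else 0.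

Lemma rpow0_pos (p x : R) : 0 < x -> rpow0 p x = Rpower x p.
Proof. intros Hx; unfold rpow0; destruct (Rlt_dec 0 x); [reflexivity | lra]. Qed.

Lemma rpow0_npos (p x : R) : x <= 0 -> rpow0 p x = 0.
Proof. intros Hx; unfold rpow0; destruct (Rlt_dec 0 x); [lra | reflexivity]. Qed.

Lemma rpow0_ge0 (p x : R) : 0 <= rpow0 p x.
Proof. unfold rpow0; destruct (Rlt_dec 0 x); [left; apply exp_pos | lra]. Qed.

Lemma is_derive_rpow0 (p x : R) : 0 < x ->
  is_derive (rpow0 p) x (p * Rpower x (p - 1)).
Proof.
  intros Hx; apply (is_derive_ext_loc (fun t => Rpower t p)).
  - apply (filter_imp (fun t => 0 < t)); [| exact (open_gt 0 x Hx)].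
    intros t Ht; symmetry; apply rpow0_pos, Ht.
  - apply is_derive_Reals, derivable_pt_lim_power, Hx.
Qed.

Lemma continuous_rpow0 (p x : R) : 0 < p -> continuous (rpow0 p) x.
Proof.
  intros Hp; destruct (Rtotal_order x 0) as [Hx | [-> | Hx]].
  - apply (continuous_ext_loc _ (fun _ => 0)); [| apply continuous_const].
    apply (filter_imp (fun t => t < 0)); [| exact (open_lt 0 x Hx)].
    intros t Ht; symmetry; apply rpow0_npos; lra.
  - apply continuity_pt_filterlim; intros eps Heps.
    exists (Rpower eps (/ p)); split; [apply exp_pos |].
    intros y [_ Hy]; simpl in *; unfold R_dist in *.
    rewrite Rminus_0_r in Hy; rewrite (rpow0_npos p 0), Rminus_0_r by lra.
    unfold rpow0; destruct (Rlt_dec 0 y) as [Hy0 | _]; [| rewrite Rabs_R0; exact Heps].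
    rewrite Rabs_right in Hy by lra; rewrite Rabs_right by (left; apply exp_pos).
    replace eps with (Rpower (Rpower eps (/ p)) p)
      by (rewrite Rpower_mult, Rinv_l by lra; apply Rpower_1, Heps).
    apply Rlt_Rpower_l; lra.
  - exact (ex_derive_continuous _ _ (ex_intro _ _ (is_derive_rpow0 p x Hx))).
Qed.

Section IntegratingFactor.

Variables A B C K : R.
Hypotheses (A_gt0 : 0 < A) (A_lt1 : A < 1).

Definition ifactor (s : R) : R := rpow0 A s * exp (B * s).

Definition slope (r : R) : R := exp (- B * r) * (K - C * RInt ifactor 0 r).

Definition dslope (r : R) : R := - B * slope r - C * rpow0 A r.

Definition parts_integrand (s : R) : R := rpow0 (1 - A) s * dslope s.

(* [int_0^r s^(-A) slope s ds], integrated by parts so that only integrands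
   continuous on all of R occur. *)
Definition phi (r : R) : R :=
  (rpow0 (1 - A) r * slope r - RInt parts_integrand 0 r) / (1 - A).

Definition dphi (r : R) : R := Rpower r (- A) * slope r.

Definition ddphi (r : R) : R := - C - (A / r + B) * dphi r.

Lemma ifactor_ge0 (s : R) : 0 <= ifactor s.
Proof.
  pose proof (rpow0_ge0 A s); pose proof (exp_pos (B * s)).
  unfold ifactor; nra.
Qed.

Lemma continuous_ifactor (s : R) : continuous ifactor s.
Proof.
  apply (continuous_mult (rpow0 A) (fun s => exp (B * s)));
    [apply continuous_rpow0, A_gt0 |].
  apply (ex_derive_continuous (fun s => exp (B * s))); auto_derive; exact I.
Qed.

Lemma is_derive_slope (r : R) : is_derive slope r (dslope r).
Proof.
  unfold dslope, slope; auto_derive.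
  - split; [| split; [| exact I]].
    + apply (@ex_RInt_continuous R_CompleteNormedModule); intros; apply continuous_ifactor.
    + apply filter_forall; intros t; apply continuity_pt_filterlim, continuous_ifactor.
  - assert (Hexp : exp (- B * r) * exp (B * r) = 1)
      by (rewrite <- exp_plus, <- exp_0; f_equal; ring).
    unfold ifactor; set (I := RInt _ 0 r).
    transitivity (- B * (exp (- B * r) * (K - C * I))
                  - C * rpow0 A r * (exp (- B * r) * exp (B * r))); [ring |].
    rewrite Hexp; ring.
Qed.

Lemma continuous_slope (r : R) : continuous slope r.
Proof. exact (ex_derive_continuous _ _ (ex_intro _ _ (is_derive_slope r))). Qed.

Lemma continuous_dslope (r : R) : continuous dslope r.
Proof.
  apply (continuous_minus (fun r => - B * slope r) (fun r => C * rpow0 A r)).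
  - apply (continuous_scal_r (- B) slope), continuous_slope.
  - apply (continuous_scal_r C (rpow0 A)), continuous_rpow0, A_gt0.
Qed.

Lemma is_derive_RInt_parts_integrand (r : R) :
  is_derive (fun r => RInt parts_integrand 0 r) r (parts_integrand r).
Proof.
  apply is_derive_RInt_0; intros t.
  apply (continuous_mult (rpow0 (1 - A)) dslope); [apply continuous_rpow0; lra |].
  apply continuous_dslope.
Qed.

Lemma continuous_phi (r : R) : continuous phi r.
Proof.
  apply (continuous_mult
    (fun r => rpow0 (1 - A) r * slope r - RInt parts_integrand 0 r) (fun _ => / (1 - A)));
    [| apply continuous_const].
  apply (continuous_minus (fun r => rpow0 (1 - A) r * slope r)).
  - apply (continuous_mult (rpow0 (1 - A)) slope); [apply continuous_rpow0; lra |].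
    apply continuous_slope.
  - exact (ex_derive_continuous _ _ (ex_intro _ _ (is_derive_RInt_parts_integrand r))).
Qed.

Lemma is_derive_phi (r : R) : 0 < r -> is_derive phi r (dphi r).
Proof.
  intros Hr.
  replace (dphi r) with
    (((1 - A) * Rpower r (1 - A - 1) * slope r + rpow0 (1 - A) r * dslope r
      - parts_integrand r) * / (1 - A)).
  - apply (is_derive_scal_l (V := R_NormedModule)
      (fun r => rpow0 (1 - A) r * slope r - RInt parts_integrand 0 r)).
    apply (is_derive_minus (fun r => rpow0 (1 - A) r * slope r));
      [| apply is_derive_RInt_parts_integrand].
    apply (is_derive_mult (rpow0 (1 - A)) slope);
      [apply is_derive_rpow0, Hr | apply is_derive_slope | exact Rmult_comm].
  - unfold dphi, parts_integrand; replace (1 - A - 1) with (- A) by ring; field; lra.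
Qed.

Lemma is_derive_dphi (r : R) : 0 < r -> is_derive dphi r (ddphi r).
Proof.
  intros Hr.
  replace (ddphi r) with
    (- A * Rpower r (- A - 1) * slope r + Rpower r (- A) * dslope r).
  - apply (is_derive_mult (fun r => Rpower r (- A)) slope);
      [apply is_derive_Reals, derivable_pt_lim_power, Hr | apply is_derive_slope
      | exact Rmult_comm].
  - unfold ddphi, dphi, dslope; rewrite rpow0_pos by exact Hr.
    replace (- A - 1) with (- A + - (1)) by ring.
    rewrite Rpower_plus, !Rpower_Ropp, Rpower_1 by exact Hr.
    pose proof (exp_pos (A * ln r)); unfold Rpower in *; field; lra.
Qed.

Lemma continuous_ddphi (r : R) : 0 < r -> continuous ddphi r.
Proof.
  intros Hr; apply (continuous_minus (fun _ => - C) (fun r => (A / r + B) * dphi r));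
    [apply continuous_const |].
  apply (continuous_mult (fun r => A / r + B) dphi).
  - apply (ex_derive_continuous (fun r => A / r + B)); auto_derive; lra.
  - exact (ex_derive_continuous _ _ (ex_intro _ _ (is_derive_dphi r Hr))).
Qed.

Lemma phi_0 : phi 0 = 0.
Proof. unfold phi; rewrite rpow0_npos, RInt_point by lra; unfold zero; simpl; field; lra. Qed.

Lemma phi_mean_value (r : R) : 0 < r ->
  exists c, 0 < c < r /\ phi r = Rpower r (1 - A) * slope c / (1 - A).
Proof.
  intros Hr.
  destruct (cauchy_mvt phi (rpow0 (1 - A)) dphi
              (fun c => (1 - A) * Rpower c (1 - A - 1)) 0 r Hr) as [c [Hc E]].
  - intros c Hc; apply is_derive_phi; lra.
  - intros c Hc; apply is_derive_rpow0; lra.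
  - apply continuous_phi.
  - intros c; apply continuous_rpow0; lra.
  - exists c; split; [exact Hc |].
    rewrite phi_0, (rpow0_npos _ 0), (rpow0_pos _ r) in E by lra.
    unfold dphi in E; replace (1 - A - 1) with (- A) in E by ring.
    pose proof (exp_pos (- A * ln c)).
    apply (Rmult_eq_reg_r (Rpower c (- A) * (1 - A))); [| unfold Rpower; nra].
    transitivity ((Rpower r (1 - A) - 0) * (Rpower c (- A) * slope c)); [rewrite E |]; field; lra.
Qed.

Lemma ddphi_lt0 (r : R) : 0 < r -> 0 <= B -> 0 < C -> 0 < dphi r -> ddphi r < 0.
Proof.
  intros Hr HB HC Hd; unfold ddphi.
  assert (0 < A / r) by (apply Rdiv_lt_0_compat; assumption); nra.
Qed.

Lemma ddphi_sub_dphi_div_le (r : R) : 0 < r -> 0 <= B -> 0 < dphi r ->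
  ddphi r - dphi r / r <= - C.
Proof.
  intros Hr HB Hd; unfold ddphi.
  assert (0 < A / r) by (apply Rdiv_lt_0_compat; assumption).
  assert (0 < dphi r / r) by (apply Rdiv_lt_0_compat; assumption); nra.
Qed.

End IntegratingFactor.

Section ChoiceOfK.

Variables A B C D delta : R.
Hypotheses (delta_gt0 : 0 < delta) (A_gt0 : 0 < A) (A_lt1 : A < 1)
  (B_ge0 : 0 <= B) (C_gt0 : 0 < C) (D_ge0 : 0 <= D).

Definition slope_floor : R := (D + 1) / Rpower delta (1 - A).

Definition K0 : R := C * RInt (ifactor A B) 0 delta + exp (B * delta) * slope_floor.

Lemma slope_floor_gt0 : 0 < slope_floor.
Proof. apply Rdiv_lt_0_compat; [lra | apply exp_pos]. Qed.

Lemma RInt_ifactor_le (a b : R) : a <= b -> RInt (ifactor A B) 0 a <= RInt (ifactor A B) 0 b.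
Proof.
  apply (le_of_is_derive_ge0 (fun r => RInt (ifactor A B) 0 r) (ifactor A B)).
  - intros x; apply is_derive_RInt_0; intros t; apply continuous_ifactor, A_gt0.
  - apply ifactor_ge0.
Qed.

Lemma slope_bounds (c : R) : 0 <= c <= delta ->
  slope_floor <= slope A B C K0 c <= K0.
Proof.
  intros [Hc0 Hcd]; unfold slope.
  pose proof slope_floor_gt0.
  assert (Hg0 : 0 <= RInt (ifactor A B) 0 c).
  { rewrite <- (RInt_point 0 (ifactor A B)) at 1; apply RInt_ifactor_le, Hc0. }
  pose proof (RInt_ifactor_le c delta Hcd) as Hgd.
  assert (Hdecay : exp (- B * c) <= 1)
    by (rewrite <- exp_0; apply exp_le_mono; nra).
  assert (Hgrowth : 1 <= exp (- B * c) * exp (B * delta))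
    by (rewrite <- exp_plus, <- exp_0; apply exp_le_mono; nra).
  pose proof (exp_pos (- B * c)); pose proof (exp_pos (B * delta)).
  assert (Hmargin : exp (B * delta) * slope_floor <= K0 - C * RInt (ifactor A B) 0 c)
    by (unfold K0; nra).
  assert (Hcap : K0 - C * RInt (ifactor A B) 0 c <= K0) by nra.
  set (X := K0 - C * RInt (ifactor A B) 0 c) in *.
  assert (0 < exp (B * delta) * slope_floor) by (apply Rmult_lt_0_compat; assumption).
  split.
  - apply Rle_trans with (exp (- B * c) * exp (B * delta) * slope_floor); nra.
  - apply Rle_trans with X; nra.
Qed.

Lemma dphi_pos (r : R) : Ioc0 delta r -> 0 < dphi A B C K0 r.
Proof.
  intros [Hr0 Hrd]; pose proof slope_floor_gt0.
  destruct (slope_bounds r) as [Hfloor _]; [lra |].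
  apply Rmult_lt_0_compat; [apply exp_pos | lra].
Qed.

Lemma phi_pos (r : R) : Ioc0 delta r -> 0 < phi A B C K0 r.
Proof.
  intros [Hr0 Hrd]; pose proof slope_floor_gt0.
  destruct (phi_mean_value A B C K0 A_gt0 A_lt1 r Hr0) as [c [Hc ->]].
  destruct (slope_bounds c) as [Hfloor _]; [lra |].
  apply Rdiv_lt_0_compat; [apply Rmult_lt_0_compat; [apply exp_pos | lra] | lra].
Qed.

Lemma phi_delta_ge : D <= phi A B C K0 delta.
Proof.
  destruct (phi_mean_value A B C K0 A_gt0 A_lt1 delta delta_gt0) as [c [Hc ->]].
  destruct (slope_bounds c) as [Hfloor _]; [lra |].
  pose proof (exp_pos ((1 - A) * ln delta)) as HP; fold (Rpower delta (1 - A)) in HP.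
  assert (HPs : D + 1 <= Rpower delta (1 - A) * slope A B C K0 c).
  { replace (D + 1) with (Rpower delta (1 - A) * slope_floor)
      by (unfold slope_floor; field; lra).
    apply Rmult_le_compat_l; lra. }
  assert (Hinv : 1 <= / (1 - A)) by (rewrite <- Rinv_1; apply Rinv_le_contravar; lra).
  unfold Rdiv; nra.
Qed.

Lemma phi_div_rpow_le (r : R) : Ioc0 delta r ->
  phi A B C K0 r / Rpower r (1 - A) <= K0 / (1 - A).
Proof.
  intros [Hr0 Hrd].
  destruct (phi_mean_value A B C K0 A_gt0 A_lt1 r Hr0) as [c [Hc ->]].
  destruct (slope_bounds c) as [_ Hcap]; [lra |].
  pose proof (exp_pos ((1 - A) * ln r)) as HP; fold (Rpower r (1 - A)) in HP.
  replace (Rpower r (1 - A) * slope A B C K0 c / (1 - A) / Rpower r (1 - A))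
    with (slope A B C K0 c / (1 - A)) by (field; lra).
  apply Rmult_le_compat_r; [left; apply Rinv_0_lt_compat; lra | exact Hcap].
Qed.

End ChoiceOfK.

Theorem lemma2p1 (A B C D delta : R) :
  0 < delta -> 0 < A -> A < 1 -> 0 <= B -> 0 < C -> 0 <= D ->
  exists phi phi1 phi2 : R -> R,
    C2_on (Ioc0 delta) phi phi1 phi2 /\
    (forall r, Icc0 delta r -> cont_within (Icc0 delta) phi r) /\
    (forall r, Ioc0 delta r -> 0 < phi r) /\
    (forall r, Ioc0 delta r -> phi2 r + (A / r + B) * phi1 r = - C) /\
    (forall r, Ioc0 delta r -> 0 < phi1 r /\ phi2 r < 0) /\
    (forall r, Ioc0 delta r -> phi2 r - phi1 r / r <= - C) /\
    D <= phi delta /\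
    (exists M, forall r, Ioc0 delta r -> phi r / Rpower r (1 - A) <= M).
Proof.
  intros Hdelta HA0 HA1 HB HC HD.
  set (K := K0 A B C D delta).
  exists (phi A B C K), (dphi A B C K), (ddphi A B C K).
  assert (Hdphi : forall r, Ioc0 delta r -> 0 < dphi A B C K r)
    by (intros r; apply dphi_pos; assumption).
  split; [| split; [| split; [| split; [| split; [| split; [| split]]]]]].
  - intros r [Hr _]; split; [| split].
    + apply deriv_within_of_is_derive, is_derive_phi; assumption.
    + apply deriv_within_of_is_derive, is_derive_dphi; assumption.
    + apply cont_within_of_continuous, continuous_ddphi; assumption.
  - intros r _; apply cont_within_of_continuous, continuous_phi; assumption.
  - intros r; apply phi_pos; assumption.
  - intros r _; unfold ddphi; ring.
  - intros r Hr; split; [exact (Hdphi r Hr) |].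
    exact (ddphi_lt0 A B C K HA0 r (proj1 Hr) HB HC (Hdphi r Hr)).
  - intros r Hr; exact (ddphi_sub_dphi_div_le A B C K HA0 r (proj1 Hr) HB (Hdphi r Hr)).
  - apply phi_delta_ge; assumption.
  - exists (K / (1 - A)); intros r; apply phi_div_rpow_le; assumption.
Qed.
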